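(* Let $M$ be a complete pointed metric space. Then $\delta(M)=\{\delta(x):x\in M\}$ is a weakly closed subset of $\mathcal F(M)$.
   Context: A pointed metric space $M$ has a distinguished origin $0$. $\mathrm{Lip}_0(M)$ is the Banach space of real Lipschitz functions on $M$ vanishing at $0$ with the best Lipschitz constant as norm; $\delta(x)\in\mathrm{Lip}_0(M)^*$ is evaluation at $x$, and the Lipschitz free space $\mathcal F(M)$ is the closed linear span of $\delta(M)$ in $\mathrm{Lip}_0(M)^*$, with $\mathcal F(M)^*=\mathrm{Lip}_0(M)$. ''Weakly'' refers to the weak topology $\sigma(\mathcal F(M),\mathrm{Lip}_0(M))$. *)

From Stdlib Require Import Reals List.
Open Scope R_scope.

Record is_metric (M : Type) (d : M -> M -> R) : Prop := {
  metric_eq0 : forall x y, d x y = 0 <-> x = y;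
  metric_sym : forall x y, d x y = d y x;
  metric_triangle : forall x y z, d x z <= d x y + d y z
}.

Definition cauchy_seq {M : Type} (d : M -> M -> R) (u : nat -> M) : Prop :=
  forall eps, 0 < eps -> exists N, forall m n, (N <= m)%nat -> (N <= n)%nat ->
    d (u m) (u n) < eps.

Definition converges_to {M : Type} (d : M -> M -> R) (u : nat -> M) (l : M) : Prop :=
  forall eps, 0 < eps -> exists N, forall n, (N <= n)%nat -> d (u n) l < eps.

Definition complete_metric {M : Type} (d : M -> M -> R) : Prop :=
  forall u, cauchy_seq d u -> exists l, converges_to d u l.

Definition lip0 {M : Type} (d : M -> M -> R) (o : M) (f : M -> R) : Prop :=
  f o = 0 /\ exists L, forall x y, Rabs (f x - f y) <= L * d x y.

Definition lip0_ball {M : Type} (d : M -> M -> R) (o : M) (f : M -> R) : Prop :=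
  f o = 0 /\ forall x y, Rabs (f x - f y) <= d x y.

(* A finitely supported molecule  sum_i a_i delta(x_i)  evaluated at f. *)
Definition eval_comb {M : Type} (l : list (R * M)) (f : M -> R) : R :=
  fold_right (fun p acc => fst p * f (snd p) + acc) 0 l.

(* An element of the dual of Lip_0(M) is represented by a functional phi on M -> R,
   of which only the values on Lip_0(M) matter; it must be linear there. *)
Definition lin_on_lip0 {M : Type} (d : M -> M -> R) (o : M)
    (phi : (M -> R) -> R) : Prop :=
  forall f g a, lip0 d o f -> lip0 d o g ->
    phi (fun x => f x + a * g x) = phi f + a * phi g.

(* F(M): the norm-closure in the dual of Lip_0(M) of span(delta(M)); i.e. linear
   functionals that are dual-norm limits of finite combinations of deltas. *)
Definition in_free {M : Type} (d : M -> M -> R) (o : M) (phi : (M -> R) -> R) : Prop :=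
  lin_on_lip0 d o phi /\
  forall eps, 0 < eps -> exists l : list (R * M),
    forall f, lip0_ball d o f -> Rabs (phi f - eval_comb l f) <= eps.

Definition in_delta_image {M : Type} (d : M -> M -> R) (o : M) (phi : (M -> R) -> R) : Prop :=
  exists x, forall f, lip0 d o f -> phi f = f x.

(* A subset C of F(M) is closed for sigma(F(M), Lip_0(M)): every point of
   F(M) outside C has a basic weak neighbourhood
   { psi in F(M) : |psi f_i - phi f_i| < eps, i } disjoint from C. *)
Definition weakly_closed_in_free {M : Type} (d : M -> M -> R) (o : M)
    (C : ((M -> R) -> R) -> Prop) : Prop :=
  forall phi, in_free d o phi -> ~ C phi ->
    exists (fs : list (M -> R)) (eps : R),
      0 < eps /\ (forall f, In f fs -> lip0 d o f) /\
      forall psi, in_free d o psi ->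
        (forall f, In f fs -> Rabs (psi f - phi f) < eps) -> ~ C psi.

(** Suppose [phi] lies in the weak closure of delta(M) but is not itself a
    point evaluation.  Testing [phi] against the functions
    [z |-> d z p - d o p] yields [h p := phi (d . p - d o p) + d o p], a
    Katětov function: [|h p - h q| <= d p q <= h p + h q].  Its infimum
    cannot be positive: an element of F(M) is nearly supported on a finite
    set [S], and the Lipschitz function [min (r/4) (dist . S)] would then be
    small on [phi] yet equal to [r/4] on every point evaluation weakly close
    to [phi].  So [h] has infimum [0], and by completeness a minimising
    sequence, which is Cauchy because [d p q <= h p + h q], converges to a
    zero [p] of [h]; then [phi = delta p]. *)

From Stdlib Require Import Reals List Lra Lia Classical ClassicalEpsilon.
From Coquelicot Require Import Rcomplements.
Open Scope R_scope.

Lemma Rabs_Rmin_sub_le a b a' b' e :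
  Rabs (a - a') <= e -> Rabs (b - b') <= e -> Rabs (Rmin a b - Rmin a' b') <= e.
Proof.
  rewrite !Rabs_le_between. intros H1 H2.
  unfold Rmin; repeat destruct Rle_dec; lra.
Qed.

Lemma eventually_inv_INR_S_lt eps :
  0 < eps -> exists N, forall n, (N <= n)%nat -> / INR (S n) < eps.
Proof.
  intros Heps. destruct (archimed_cor1 eps Heps) as [N [HN HN0]].
  exists N. intros n Hn. eapply Rle_lt_trans; [|exact HN].
  apply Rinv_le_contravar; [apply lt_0_INR; lia | apply le_INR; lia].
Qed.

Section Metric.

Context {M : Type} (d : M -> M -> R).
Hypothesis Hmetric : is_metric M d.

Lemma dist_xx x : d x x = 0.
Proof. apply (metric_eq0 _ _ Hmetric). reflexivity. Qed.

Lemma dist_ge0 x y : 0 <= d x y.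
Proof.
  pose proof (metric_triangle _ _ Hmetric x y x).
  rewrite (metric_sym _ _ Hmetric y x), dist_xx in H. lra.
Qed.

Lemma Rabs_dist_sub_le x y z : Rabs (d x z - d y z) <= d x y.
Proof.
  pose proof (metric_triangle _ _ Hmetric x y z).
  pose proof (metric_triangle _ _ Hmetric y x z).
  rewrite (metric_sym _ _ Hmetric y x) in *.
  apply Rabs_le. lra.
Qed.

Lemma lip0_of_ball o f : lip0_ball d o f -> lip0 d o f.
Proof.
  intros [Hf0 Hf]. split; [exact Hf0|].
  exists 1. intros x y. rewrite Rmult_1_l. apply Hf.
Qed.

Definition centered_dist (o p : M) (z : M) : R := d z p - d o p.

Lemma centered_dist_ball o p : lip0_ball d o (centered_dist o p).
Proof.
  split; unfold centered_dist; [ring|].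
  intros x y. replace (d x p - d o p - (d y p - d o p)) with (d x p - d y p) by ring.
  apply Rabs_dist_sub_le.
Qed.

Definition capped_dist (c : R) (S : list M) (x : M) : R :=
  fold_right Rmin c (map (d x) S).

Lemma Rabs_capped_dist_sub_le c S x z :
  Rabs (capped_dist c S x - capped_dist c S z) <= d x z.
Proof.
  induction S as [|y S IH]; simpl.
  - rewrite Rminus_diag, Rabs_R0. apply dist_ge0.
  - apply Rabs_Rmin_sub_le; [apply Rabs_dist_sub_le | exact IH].
Qed.

Lemma capped_dist_le_dist c S x y : In y S -> capped_dist c S x <= d x y.
Proof.
  induction S as [|z S IH]; simpl; [tauto|].
  intros [<-|Hy]; [apply Rmin_l|].
  eapply Rle_trans; [apply Rmin_r | auto].
Qed.

Lemma capped_dist_ge0 c S x : 0 <= c -> 0 <= capped_dist c S x.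
Proof.
  intros Hc. induction S as [|y S IH]; simpl; auto.
  apply Rmin_glb; [apply dist_ge0 | exact IH].
Qed.

Lemma capped_dist_eq0 c S y : 0 <= c -> In y S -> capped_dist c S y = 0.
Proof.
  intros Hc Hy. apply Rle_antisym.
  - rewrite <- (dist_xx y). apply capped_dist_le_dist, Hy.
  - apply capped_dist_ge0, Hc.
Qed.

Lemma capped_dist_eq_cap c S x :
  (forall y, In y S -> c <= d x y) -> capped_dist c S x = c.
Proof.
  unfold capped_dist. induction S as [|y S IH]; simpl; auto.
  intros Hfar. rewrite IH by auto. apply Rmin_right, Hfar. auto.
Qed.

Record katetov (h : M -> R) : Prop := {
  katetov_lip : forall p q, h p <= h q + d p q;
  katetov_dist : forall p q, d p q <= h p + h q
}.

Lemma katetov_ge0 h : katetov h -> forall p, 0 <= h p.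
Proof.
  intros Hh p. pose proof (katetov_dist _ Hh p p). rewrite dist_xx in H. lra.
Qed.

Lemma complete_katetov_inf0_attained h :
  complete_metric d -> katetov h ->
  (forall eps, 0 < eps -> exists p, h p < eps) -> exists p, h p = 0.
Proof.
  intros Hcomplete Hh Hinf.
  destruct (choice (fun n p => h p < / INR (S n))) as [u Hu].
  { intros n. apply Hinf, Rinv_0_lt_compat, lt_0_INR. lia. }
  assert (Hu0 : forall eps, 0 < eps -> exists N, forall n, (N <= n)%nat -> h (u n) < eps).
  { intros eps Heps. destruct (eventually_inv_INR_S_lt eps Heps) as [N HN].
    exists N. intros n Hn. specialize (Hu n). specialize (HN n Hn). lra. }
  destruct (Hcomplete u) as [l Hl].
  { intros eps Heps. destruct (Hu0 (eps / 2)) as [N HN]; [lra|].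
    exists N. intros m n Hm Hn.
    pose proof (katetov_dist _ Hh (u m) (u n)). pose proof (HN m Hm). pose proof (HN n Hn). lra. }
  exists l. apply Rle_antisym; [|apply katetov_ge0, Hh].
  apply Rle_plus_epsilon. intros eps Heps.
  destruct (Hu0 (eps / 2)) as [N HN]; [lra|].
  destruct (Hl (eps / 2)) as [K HK]; [lra|].
  pose proof (HN (Nat.max N K) (Nat.le_max_l _ _)).
  pose proof (HK (Nat.max N K) (Nat.le_max_r _ _)).
  pose proof (katetov_lip _ Hh l (u (Nat.max N K))).
  rewrite (metric_sym _ _ Hmetric l) in *. lra.
Qed.

End Metric.

Lemma eval_comb_eq0 M (l : list (R * M)) f :
  (forall y, In y (map snd l) -> f y = 0) -> eval_comb l f = 0.
Proof.
  induction l as [|[a y] l IH]; simpl; auto.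
  intros Hf. rewrite IH, Hf by auto. ring.
Qed.

Definition weakly_adherent_delta {M} (d : M -> M -> R) (o : M)
    (phi : (M -> R) -> R) : Prop :=
  forall fs eps, 0 < eps -> (forall f, In f fs -> lip0 d o f) ->
    exists x, forall f, In f fs -> Rabs (f x - phi f) < eps.

Lemma weakly_closed_delta_of_adherent M (d : M -> M -> R) o :
  (forall phi, in_free d o phi -> weakly_adherent_delta d o phi ->
     in_delta_image d o phi) ->
  weakly_closed_in_free d o (in_delta_image d o).
Proof.
  intros Hadh phi Hphi Hnd. apply NNPP. intros Hsep.
  apply Hnd, Hadh; [exact Hphi|].
  intros fs eps Heps Hfs. apply NNPP. intros Hfar. apply Hsep.
  exists fs, eps. split; [exact Heps|]. split; [exact Hfs|].
  intros psi _ Hclose [x Hx]. apply Hfar.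
  exists x. intros f Hf. rewrite <- Hx by auto. auto.
Qed.

(** For [phi = delta x] this is [d x p]. *)
Definition dist_functional {M} (d : M -> M -> R) (o : M)
    (phi : (M -> R) -> R) (p : M) : R :=
  phi (centered_dist d o p) + d o p.

Section DistFunctional.

Context {M : Type} (d : M -> M -> R) (o : M) (phi : (M -> R) -> R).
Hypothesis Hmetric : is_metric M d.
Hypothesis Hadh : weakly_adherent_delta d o phi.

Let h := dist_functional d o phi.

Lemma centered_dist_sub_phi p x :
  centered_dist d o p x - phi (centered_dist d o p) = d x p - h p.
Proof. unfold h, dist_functional, centered_dist. ring. Qed.

Lemma adherent_dist_approx p q eps :
  0 < eps -> exists x, Rabs (d x p - h p) < eps /\ Rabs (d x q - h q) < eps.
Proof.
  intros Heps.
  destruct (Hadh (centered_dist d o p :: centered_dist d o q :: nil) eps Heps) as [x Hx].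
  { intros f [<-|[<-|[]]]; apply lip0_of_ball, centered_dist_ball; exact Hmetric. }
  exists x. rewrite <- !centered_dist_sub_phi. split; apply Hx; simpl; auto.
Qed.

Lemma katetov_dist_functional : katetov d h.
Proof.
  split; intros p q; apply Rle_plus_epsilon; intros eps Heps;
    destruct (adherent_dist_approx p q (eps / 2)) as [x [Hp Hq]]; try lra;
    rewrite Rabs_lt_between in Hp, Hq.
  - pose proof (metric_triangle _ _ Hmetric x q p).
    rewrite (metric_sym _ _ Hmetric q p) in *. lra.
  - pose proof (metric_triangle _ _ Hmetric p x q).
    rewrite (metric_sym _ _ Hmetric p x) in *. lra.
Qed.

Lemma dist_functional_eq0_delta p :
  h p = 0 -> forall f, lip0 d o f -> phi f = f p.
Proof.
  intros Hp f Hf. pose proof Hf as [_ [L HL]].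
  assert (Hclose : forall e, 0 < e -> Rabs (phi f - f p) <= (Rabs L + 1) * e).
  { intros e He.
    destruct (Hadh (f :: centered_dist d o p :: nil) e He) as [x Hx].
    { intros g [<-|[<-|[]]]; [exact Hf|].
      apply lip0_of_ball, centered_dist_ball; exact Hmetric. }
    assert (Hfx : Rabs (f x - phi f) < e) by (apply Hx; simpl; auto).
    assert (Hxp : d x p < e).
    { assert (H : Rabs (centered_dist d o p x - phi (centered_dist d o p)) < e)
        by (apply Hx; simpl; auto).
      rewrite centered_dist_sub_phi, Hp, Rminus_0_r in H.
      eapply Rle_lt_trans; [apply Rle_abs | exact H]. }
    assert (Hlip : Rabs (f x - f p) <= Rabs L * e).
    { eapply Rle_trans; [apply HL|].
      pose proof (dist_ge0 d Hmetric x p).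
      apply Rle_trans with (Rabs L * d x p).
      - apply Rmult_le_compat_r; [lra | apply Rle_abs].
      - apply Rmult_le_compat_l; [apply Rabs_pos | lra]. }
    replace (phi f - f p) with ((f x - f p) - (f x - phi f)) by ring.
    eapply Rle_trans; [apply Rabs_triang|]. rewrite Rabs_Ropp. lra. }
  assert (Habs : Rabs (phi f - f p) <= 0).
  { apply Rle_plus_epsilon. intros eps Heps. rewrite Rplus_0_l.
    pose proof (Rabs_pos L).
    replace eps with ((Rabs L + 1) * (eps / (Rabs L + 1))) by (field; lra).
    apply Hclose, Rdiv_lt_0_compat; lra. }
  rewrite Rabs_le_between in Habs. lra.
Qed.

Lemma dist_functional_inf0 :
  in_free d o phi -> forall r, 0 < r -> exists p, h p < r.
Proof.
  intros [_ Hfree] r Hr. apply NNPP. intros Hno.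
  assert (Hfar : forall p, r <= h p).
  { intros p. apply Rnot_lt_le. intros Hp. apply Hno. exists p. exact Hp. }
  destruct (Hfree (r / 8)) as [l Hl]; [lra|].
  set (S := o :: map snd l).
  set (f := capped_dist d (r / 4) S).
  assert (HfS : forall y, In y S -> f y = 0) by (intros; apply capped_dist_eq0; auto; lra).
  assert (Hball : lip0_ball d o f).
  { split; [apply HfS; simpl; auto|]. apply Rabs_capped_dist_sub_le, Hmetric. }
  assert (Hphif : Rabs (phi f) <= r / 8).
  { specialize (Hl f Hball). rewrite eval_comb_eq0, Rminus_0_r in Hl; auto.
    intros y Hy. apply HfS. simpl. auto. }
  destruct (Hadh (f :: map (centered_dist d o) S) (r / 8)) as [x Hx]; [lra| |].
  { intros g [<-|Hg]; [apply lip0_of_ball; auto|].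
    apply in_map_iff in Hg. destruct Hg as [p [<- _]].
    apply lip0_of_ball, centered_dist_ball; exact Hmetric. }
  (* [x] is weakly close to [phi], hence at distance about [h y >= r] from each [y] in [S]. *)
  assert (Hfx : f x = r / 4).
  { apply capped_dist_eq_cap. intros y Hy.
    assert (H : Rabs (centered_dist d o y x - phi (centered_dist d o y)) < r / 8)
      by (apply Hx; right; apply in_map; exact Hy).
    rewrite centered_dist_sub_phi, Rabs_lt_between in H.
    specialize (Hfar y). lra. }
  assert (H : Rabs (f x - phi f) < r / 8) by (apply Hx; simpl; auto).
  rewrite Hfx, Rabs_lt_between in H. rewrite Rabs_le_between in Hphif. lra.
Qed.

End DistFunctional.

Theorem proposition2p9 (M : Type) (d : M -> M -> R) (o : M)
  (Hmetric : is_metric M d) (Hcomplete : complete_metric d) :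
  weakly_closed_in_free d o (in_delta_image d o).
Proof.
  apply weakly_closed_delta_of_adherent. intros phi Hfree Hadh.
  destruct (complete_katetov_inf0_attained d Hmetric (dist_functional d o phi))
    as [p Hp].
  - exact Hcomplete.
  - exact (katetov_dist_functional d o phi Hmetric Hadh).
  - exact (dist_functional_inf0 d o phi Hmetric Hadh Hfree).
  - exists p. exact (dist_functional_eq0_delta d o phi Hmetric Hadh p Hp).
Qed.
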